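(* Let $F=f+\mu c$ with $\mu>0$, where $c:\mathbb{R}^n\to\mathbb{R}$ is convex and $f:\mathbb{R}^n\to\mathbb{R}$ is continuously differentiable with $L$-Lipschitz gradient and strongly convex with constant $L'>0$ (i.e. $(\nabla f(x)-\nabla f(y))^T(x-y)\ge L'\|x-y\|^2$). Let $\{x_k\}$ be generated by $x_{k+1}=x_k+\alpha_kd_k$, where $d_k=\mathscr{P}_c(x_k-\tau_k\nabla f(x_k),\mu\tau_k)-x_k\ne0$ with $0<\tau_{\min}\le\tau_k\le\tau_{\max}<\infty$, and where, for a fixed $\theta>0$ and every $k$, the step size $\alpha_k\in(0,1]$ satisfies $\nu(\alpha_k)|1-\lambda(\alpha_k)|\ge\theta$ and $F_{k+1}-R_k\ge-\frac{\alpha_k^2}{2}L\|d_k\|^2+\alpha_k\Delta_k$. Suppose $x_k\to x^*$, a minimizer of $F$. Then there exist constants $q\in(0,1)$ and $\xi_1,\xi_2,\xi_3>0$ such that for all $k$ $$F_k-F(x^* )\le\xi_1q^{2k},\qquad \|x_k-x^*\|\le\xi_2q^k,\qquad \|d_k\|\le\xi_3q^k .$$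
   Context: Notation: $h_k=h(x_k)$, $\nabla h_k=\nabla h(x_k)$; $\mathscr{P}_c(x,\vartheta)=\operatorname{argmin}_y\{\vartheta c(y)+\frac12\|x-y\|^2\}$ for $\vartheta>0$. $\Delta_k=d_k^T\nabla f_k+\mu(c(x_k+d_k)-c_k)$. Reference value: for an integer $N>0$, $m(0)=0$, $0\le m(k)\le\min\{m(k-1)+1,N-1\}$, $F_{l(k)}=\max_{0\le j\le m(k)}F_{k-j}$, and $R_k=\eta_kF_{l(k)}+(1-\eta_k)F_k$ with $\eta_k\in[0,1]$. Goldstein quotients: $\nu(\alpha_k)=\frac{F_{k+1}-F_k}{\alpha_k\Delta_k}$ and $\lambda(\alpha_k)=\frac{F_{k+1}-R_k}{\alpha_k\Delta_k}$. *)

From HB Require Import structures.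
From mathcomp Require Import all_boot all_order all_algebra.
From mathcomp Require Import all_classical all_reals all_analysis.
Set Implicit Arguments. Unset Strict Implicit. Unset Printing Implicit Defensive.
Import Order.TTheory GRing.Theory Num.Theory.
Import numFieldNormedType.Exports.
Local Open Scope ring_scope.

Section Defs.
Variables (R : realType) (n : nat).
Local Notation V := 'rV[R]_n.

Definition dotv (u v : V) : R := \sum_(i < n) u ord0 i * v ord0 i.
Definition enorm (u : V) : R := Num.sqrt (dotv u u).

Definition is_gradient (f : V -> R) (g : V -> V) : Prop :=
  forall x, differentiable f x /\ forall h, ('d f x : V -> R) h = dotv (g x) h.

Definition convex_fun (c : V -> R) : Prop :=
  forall (x y : V) (t : R), 0 <= t <= 1 ->
    c (t *: x + (1 - t) *: y) <= t * c x + (1 - t) * c y.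

(* p is an element of P_c(x, th) = argmin_y { th c(y) + 1/2 ||x - y||^2 } *)
Definition is_prox (c : V -> R) (x : V) (th : R) (p : V) : Prop :=
  forall y, th * c p + enorm (x - p) ^+ 2 / 2 <= th * c y + enorm (x - y) ^+ 2 / 2.

(* F_{l(k)} = max_{0 <= j <= m(k)} F_{k-j} *)
Definition Fmax (Fs : nat -> R) (m : nat -> nat) (k : nat) : R :=
  \big[Num.max/Fs k]_(j < (m k).+1) Fs (k - j)%N.

(* R_k = eta_k F_{l(k)} + (1 - eta_k) F_k *)
Definition refval (Fs : nat -> R) (m : nat -> nat) (eta : nat -> R) (k : nat) : R :=
  eta k * Fmax Fs m k + (1 - eta k) * Fs k.

End Defs.

From HB Require Import structures.
From mathcomp Require Import all_boot all_order all_algebra.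
From mathcomp Require Import all_classical all_reals all_analysis.
From mathcomp Require Import ring lra.
Import Order.TTheory GRing.Theory Num.Theory.
Import numFieldNormedType.Exports.
Local Open Scope classical_set_scope.
Local Open Scope ring_scope.
Set Implicit Arguments. Unset Strict Implicit. Unset Printing Implicit Defensive.

(* The prox step gives [tau_k Delta_k <= - ||d_k||^2], so every [Delta_k] is negative.
   The two line-search conditions and the descent lemma bound [alpha_k] from below,
   which yields the sufficient decrease [F_(k+1) <= R_k + kappa Delta_k]; strong
   convexity and the prox inequality at the minimizer [x*] give the error bound
   [F_k - Fopt <= C (- Delta_k)], where [Fopt] is the optimal value. Together they
   give [F_(k+1) - Fopt <= rho (F_l(k) - Fopt)] with [rho < 1], and since [F_l(k)] is
   a maximum over at most [N] past values, the gaps decay like [r^k] with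
   [r = 1 - (1 - rho) / N]. Quadratic growth of [F] at [x*] and
   [||d_k||^2 <= K ||x_k - x*||^2] turn this into the three rates, with [q = sqrt r]. *)

Section InnerProduct.
Variables (R : realType) (n : nat).
Local Notation V := 'rV[R]_n.
Local Notation dv := (@dotv R n).

Lemma dotvC (u v : V) : dv u v = dv v u.
Proof. by apply: eq_bigr => i _; rewrite mulrC. Qed.

Lemma dotvDl (u v w : V) : dv (u + v) w = dv u w + dv v w.
Proof. by rewrite /dotv -big_split; apply: eq_bigr => i _; rewrite !mxE mulrDl. Qed.

Lemma dotvDr (u v w : V) : dv w (u + v) = dv w u + dv w v.
Proof. by rewrite dotvC dotvDl !(dotvC w). Qed.

Lemma dotvZl (a : R) (u w : V) : dv (a *: u) w = a * dv u w.
Proof. by rewrite /dotv mulr_sumr; apply: eq_bigr => i _; rewrite !mxE mulrA. Qed.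

Lemma dotvZr (a : R) (u w : V) : dv w (a *: u) = a * dv w u.
Proof. by rewrite dotvC dotvZl dotvC. Qed.

Lemma dotvNl (u w : V) : dv (- u) w = - dv u w.
Proof. by rewrite -scaleN1r dotvZl mulN1r. Qed.

Lemma dotvNr (u w : V) : dv w (- u) = - dv w u.
Proof. by rewrite dotvC dotvNl dotvC. Qed.

Lemma dotvBl (u v w : V) : dv (u - v) w = dv u w - dv v w.
Proof. by rewrite dotvDl dotvNl. Qed.

Lemma dotvBr (u v w : V) : dv w (u - v) = dv w u - dv w v.
Proof. by rewrite dotvDr dotvNr. Qed.

Definition dotvE := (dotvDl, dotvDr, dotvBl, dotvBr, dotvNl, dotvNr, dotvZl, dotvZr).

Lemma dotv_ge0 (u : V) : 0 <= dv u u.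
Proof. by apply: sumr_ge0 => i _; rewrite -expr2 sqr_ge0. Qed.

Lemma dotv_gt0 (u : V) : u != 0 -> 0 < dv u u.
Proof.
move=> u0; rewrite lt_def dotv_ge0 andbT; apply: contra u0 => /eqP u2_0.
apply/eqP/rowP => i; rewrite mxE.
have := @psumr_eq0P _ 'I_n xpredT (fun i => u ord0 i * u ord0 i)
  (fun i _ => ltac:(by rewrite /= -expr2 sqr_ge0)) u2_0 i isT.
by move/eqP; rewrite mulf_eq0 orbb => /eqP.
Qed.

Lemma enorm_sqr (u : V) : enorm u ^+ 2 = dv u u.
Proof. by rewrite /enorm sqr_sqrtr // dotv_ge0. Qed.

Lemma dotv_young (u v : V) (s : R) : 0 < s ->
  2 * dv u v <= s * dv u u + dv v v / s.
Proof.
move=> s0; have := dotv_ge0 (s *: u - v).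
rewrite !dotvE (dotvC v u) => sq_ge0.
rewrite -(ler_pM2l s0) mulrDr (mulrC s (dv v v / s)) divfK ?gt_eqF //.
nra.
Qed.

Lemma dotv_sqrBZ (u v : V) (t : R) :
  dv (u - t *: v) (u - t *: v) = dv u u - 2 * t * dv u v + t ^+ 2 * dv v v.
Proof. by rewrite !dotvE (dotvC v u); ring. Qed.

(* [L] itself may be [0], or even negative when [n = 0]; [`|L| + 1] is a positive
   Lipschitz constant in every case. *)
Lemma lipschitz_dotv (g : V -> V) (L : R) :
  (forall y z, enorm (g y - g z) <= L * enorm (y - z)) ->
  forall y z, dv (g y - g z) (g y - g z) <= (`|L| + 1) ^+ 2 * dv (y - z) (y - z).
Proof.
move=> g_lip y z; rewrite -!enorm_sqr -exprMn.
have L_le : L <= `|L| + 1 by rewrite (le_trans (ler_norm L)) // lerDl.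
have L1_ge0 : 0 <= `|L| + 1 by rewrite addr_ge0.
rewrite ler_sqr ?nnegrE ?mulr_ge0 ?sqrtr_ge0 //.
apply: le_trans (g_lip y z) _.
by apply: ler_wpM2r; [exact: sqrtr_ge0 | exact: L_le].
Qed.

End InnerProduct.

Lemma convex_along (R : realType) (n : nat) (c : 'rV[R]_n -> R) (x h : 'rV[R]_n) (t : R) :
  convex_fun c -> 0 <= t <= 1 ->
  c (x + t *: h) <= t * c (x + h) + (1 - t) * c x.
Proof.
move=> c_cvx t01.
have -> : x + t *: h = t *: (x + h) + (1 - t) *: x.
  by apply/rowP => i; rewrite !mxE; ring.
exact: c_cvx.
Qed.

Lemma ge0_of_linear_quadratic (R : realType) (a b : R) :
  (forall t, 0 < t <= 1 -> 0 <= t * a + t ^+ 2 * b) -> 0 <= a.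
Proof.
move=> quad_ge0; rewrite leNgt; apply/negP => a_lt0.
have [b_le0|b_gt0] := lerP b 0.
  by have := quad_ge0 1 (ltac:(by rewrite ltr01 lexx)); rewrite expr1n !mul1r; lra.
pose t := Num.min 1 (- a / (2 * b)).
have t_gt0 : 0 < t by rewrite lt_min ltr01 /= divr_gt0 // ?oppr_gt0 // mulr_gt0.
have t_le1 : t <= 1 by rewrite ge_min lexx.
have tb : t * b <= - a / 2.
  have : t <= - a / (2 * b) by rewrite ge_min lexx orbT.
  by rewrite ler_pdivlMr ?mulr_gt0 // => ?; rewrite ler_pdivlMr //; nra.
by have := quad_ge0 t; rewrite t_gt0 t_le1 /= => /(_ isT); rewrite expr2; nra.
Qed.

Lemma prox_variational_ineq (R : realType) (n : nat) (c : 'rV[R]_n -> R)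
    (z p w : 'rV[R]_n) (th : R) :
  convex_fun c -> 0 <= th -> is_prox c z th p ->
  dotv (z - p) (w - p) <= th * (c w - c p).
Proof.
move=> c_cvx th_ge0 p_prox; rewrite -subr_ge0.
apply: (ge0_of_linear_quadratic (b := dotv (w - p) (w - p) / 2)) => t /andP[t_gt0 t_le1].
have := p_prox (p + t *: (w - p)); rewrite !enorm_sqr.
have -> : z - (p + t *: (w - p)) = (z - p) - t *: (w - p) by rewrite opprD addrA.
rewrite dotv_sqrBZ.
have := convex_along p (w - p) c_cvx (ltac:(by rewrite ltW // t_le1) : 0 <= t <= 1).
rewrite [p + (w - p)]addrC subrK => /(ler_wpM2l th_ge0) c_le p_min.
nra.
Qed.

Section Gradient.
Variables (R : realType) (n : nat).
Local Notation V := 'rV[R]_n.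
Local Notation dv := (@dotv R n).
Variables (f : V -> R) (g : V -> V).
Hypothesis f_grad : is_gradient f g.

Lemma is_derive_along (x h : V) (t : R) :
  is_derive t 1 (fun s : R => f (x + s *: h)) (dv (g (x + t *: h)) h).
Proof.
pose l := fun s : R => x + s *: h.
have el : l = cst x + (fun s : R => s *: h) by apply/funext.
have dx : differentiable (cst x : R -> V) t := differentiable_cst _ _.
have dZ : differentiable ( *:%R^~ h : R -> V) t.
  exact: (@differentiableZl _ _ _ (fun s => s) h t).
have dl : differentiable l t by rewrite el; apply: differentiableD.
have dl1 : 'd l t 1 = h.
  rewrite el diffD //.
  have d_cst : 'd (cst x) t 1 = 0 :> V by rewrite diff_cst.
  have d_scale : 'd ( *:%R^~ h) t 1 = h.
    by rewrite (@diffZl _ _ _ (fun s => s) h t) // diff_val scale1r.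
  exact: (etrans (congr2 +%R d_cst d_scale) (add0r h)).
have [dfx dfv] := f_grad (l t).
have dc : differentiable (f \o l) t by apply: differentiable_comp.
have := derivableP (@diff_derivable _ _ _ _ _ (1 : R) dc).
rewrite deriveE // => fl'; apply: (is_derive_eq fl').
rewrite diff_comp //.
exact: (etrans (congr1 ('d f (l t)) dl1) (dfv h)).
Qed.

Lemma gradient_mvt (x h : V) :
  exists2 s : R, 0 < s < 1 & f (x + h) - f x = dv (g (x + s *: h)) h.
Proof.
pose phi := fun s : R => f (x + s *: h).
have phi' t : is_derive t (1 : R) phi (dv (g (x + t *: h)) h).
  exact: is_derive_along.
have phi_cont : {within `[0, 1], continuous phi}.
  apply: continuous_subspaceT => t.
  apply: differentiable_continuous; apply/derivable1_diffP.
  by have [] := phi' t.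
have [s s01 E] := MVT ltr01 (fun t _ => phi' t) phi_cont.
exists s; first by move: s01; rewrite in_itv /= => /andP[-> ->].
by move: E; rewrite /phi scale1r scale0r addr0 subr0 mulr1.
Qed.

Section Lipschitz.
Variable L1 : R.
Hypothesis L1_gt0 : 0 < L1.
Hypothesis g_lip : forall y z, dv (g y - g z) (g y - g z) <= L1 ^+ 2 * dv (y - z) (y - z).

Lemma descent (x h : V) : f (x + h) - f x <= dv (g x) h + L1 * dv h h.
Proof.
have [s /andP[s_gt0 s_lt1] ->] := gradient_mvt x h.
rewrite -[g (x + s *: h)](addrNK (g x)) dotvDl addrC lerD2l.
have iL1_gt0 : 0 < L1^-1 by rewrite invr_gt0.
have := dotv_young (g (x + s *: h) - g x) h iL1_gt0.
have := g_lip (x + s *: h) x; rewrite [_ + _ - x]addrAC subrr add0r !dotvZl !dotvZr invrK.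
have hh := dotv_ge0 h.
have ss : s * (s * dv h h) <= dv h h.
  by rewrite mulrA -[leRHS]mul1r ler_wpM2r //; nra.
move=> lip young.
have : L1^-1 * (L1 ^+ 2 * (s * (s * dv h h))) <= L1 * dv h h.
  by rewrite expr2 !mulrA mulVf ?gt_eqF // mul1r -!mulrA ler_pM2l.
have : L1^-1 * dv (g (x + s *: h) - g x) (g (x + s *: h) - g x)
       <= L1^-1 * (L1 ^+ 2 * (s * (s * dv h h))) by rewrite ler_pM2l ?invr_gt0.
nra.
Qed.

Lemma composite_opt_cond (c : V -> R) (mu : R) (xs : V) :
  convex_fun c -> 0 <= mu ->
  (forall y, f xs + mu * c xs <= f y + mu * c y) ->
  forall h, 0 <= dv (g xs) h + mu * (c (xs + h) - c xs).
Proof.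
move=> c_cvx mu_ge0 xs_min h.
apply: (ge0_of_linear_quadratic (b := L1 * dv h h)) => t /andP[t_gt0 t_le1].
have := xs_min (xs + t *: h).
have := descent xs (t *: h); rewrite !dotvZl !dotvZr.
have := convex_along xs h c_cvx (ltac:(by rewrite ltW // t_le1) : 0 <= t <= 1).
move=> /(ler_wpM2l mu_ge0) c_le f_le xs_le.
rewrite expr2; nra.
Qed.

End Lipschitz.

Section StrongConvexity.
Variable L' : R.
Hypothesis L'_ge0 : 0 <= L'.
Hypothesis g_strong : forall y z, L' * dv (y - z) (y - z) <= dv (g y - g z) (y - z).

Lemma gradient_lower_bound (y z : V) : dv (g z) (y - z) <= f y - f z.
Proof.
have [s /andP[s_gt0 s_lt1]] := gradient_mvt z (y - z).
rewrite [z + _]addrC subrK => ->.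
have := g_strong (z + s *: (y - z)) z.
rewrite [_ + _ - z]addrAC subrr add0r !dotvZl !dotvZr => strong.
have lhs_ge0 : 0 <= L' * (s * (s * dv (y - z) (y - z))).
  by rewrite !mulr_ge0 ?dotv_ge0 // ltW.
have := le_trans lhs_ge0 strong.
by rewrite pmulr_rge0 // dotvBl subr_ge0.
Qed.

(* Convexity at the midpoint [m] applied twice, the second time sharpened by strong
   monotonicity. *)
Lemma quadratic_growth (y z : V) :
  dv (g z) (y - z) + L' / 4 * dv (y - z) (y - z) <= f y - f z.
Proof.
pose m := 2^-1 *: (y + z).
have ym : y - m = 2^-1 *: (y - z) by apply/rowP => i; rewrite !mxE; field.
have mz : m - z = 2^-1 *: (y - z) by apply/rowP => i; rewrite !mxE; field.
have h1 := gradient_lower_bound y m; have h2 := gradient_lower_bound m z.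
have h3 := g_strong m z.
rewrite ym in h1; rewrite mz in h2 h3.
rewrite !dotvZl !dotvZr !dotvBl in h1 h2 h3.
rewrite dotvBl; lra.
Qed.

End StrongConvexity.
End Gradient.

Definition goldstein_const (R : realType) (theta K : R) : R :=
  theta / (1 + theta) * (theta / ((1 + K) * K)).

Lemma goldstein_const_gt0 (R : realType) (theta K : R) :
  0 < theta -> 0 < K -> 0 < goldstein_const theta K.
Proof.
move=> th_gt0 K_gt0.
have th1_gt0 : 0 < 1 + theta by rewrite addr_gt0.
have K1_gt0 : 0 < (1 + K) * K by rewrite mulr_gt0 // addr_gt0.
by rewrite /goldstein_const mulr_gt0 // divr_gt0.
Qed.

(* [P], [Q] are the decreases [F_(k+1) - F_k], [F_(k+1) - R_k], [A] the model decrease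
   [alpha_k Delta_k], and [Nd] stands for [||d_k||^2]. *)
Lemma goldstein_decrease (R : realType) (A P Q alpha D Nd tmax L1 theta : R) :
  0 < alpha <= 1 -> D < 0 -> A = alpha * D -> Nd <= tmax * (- D) ->
  0 < L1 -> 0 < tmax -> 0 < theta ->
  Q <= P -> P <= A + alpha ^+ 2 * L1 * Nd -> A - alpha ^+ 2 / 2 * L1 * Nd <= Q ->
  theta <= P / A * `|1 - Q / A| ->
  Q <= goldstein_const theta (L1 * tmax) * D.
Proof.
move=> /andP[a_gt0 a_le1] D_lt0 EA Nd_le L1_gt0 tmax_gt0 th_gt0 QP PA AQ quot.
set K := L1 * tmax.
have K_gt0 : 0 < K by rewrite mulr_gt0.
have A_lt0 : A < 0 by rewrite EA pmulr_rlt0.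
set nu := P / A in quot; set la := Q / A in quot.
have EP : P = nu * A by rewrite /nu divfK ?lt_eqF.
have EQ : Q = la * A by rewrite /la divfK ?lt_eqF.
have nu_le_la : nu <= la by rewrite -(ler_nM2r A_lt0) -EP -EQ.
have aD : 0 < alpha * - D by rewrite mulr_gt0 // oppr_gt0.
have LN : alpha ^+ 2 * L1 * Nd <= alpha * K * (alpha * - D).
  have : L1 * Nd <= L1 * (tmax * - D) by rewrite ler_pM2l.
  by rewrite /K expr2 => ?; nra.
have nu_ge : 1 - nu <= alpha * K.
  rewrite -(ler_pM2r aD).
  have -> : (1 - nu) * (alpha * - D) = nu * A - A by rewrite EA; ring.
  by rewrite -EP; lra.
have la_le : la - 1 <= alpha * K.
  rewrite -(ler_pM2r aD).
  have -> : (la - 1) * (alpha * - D) = A - la * A by rewrite EA; ring.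
  rewrite -EQ; have : 0 <= alpha ^+ 2 * L1 * Nd by lra.
  lra.
have nu_gt0 : 0 < nu.
  rewrite ltNge; apply/negP => nu_le0.
  have : nu * `|1 - la| <= 0 by have := normr_ge0 (1 - la); nra.
  lra.
(* Either [la >= theta/(1+theta)] outright, or [la > 1] and then [nu - 1] and
   [la - 1] are both O(alpha); in both cases [alpha] is bounded below. *)
have [la_ge alpha_ge] : theta / (1 + theta) <= la /\ theta <= alpha * ((1 + K) * K).
  have s1 : theta / (1 + theta) <= theta by rewrite ler_pdivrMr; [nra|lra].
  have s2 : theta / (1 + theta) <= 1 by rewrite ler_pdivrMr; lra.
  have [la_le1|la_gt1] := lerP la 1.
    move: quot; rewrite ger0_norm ?subr_ge0 // => quot.
    have e1 : nu * (1 - la) <= 1 - la by rewrite ler_piMl ?subr_ge0 //; lra.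
    have e2 : nu * (1 - la) <= nu by rewrite ler_piMr ?ltW //; lra.
    split; first by lra.
    have : alpha * K <= alpha * ((1 + K) * K).
      by rewrite ler_pM2l // ler_peMl ?ltW //; lra.
    lra.
  move: quot; rewrite ltr0_norm ?subr_lt0 // opprB => quot.
  split; first by lra.
  have e1 : nu <= 1 + K.
    have : alpha * K <= K by rewrite ler_piMl // ltW.
    lra.
  have e2 : nu * (la - 1) <= (1 + K) * (alpha * K) by apply: ler_pM; lra.
  nra.
have alpha_lb : theta / ((1 + K) * K) <= alpha.
  by rewrite ler_pdivrMr // mulr_gt0 //; lra.
rewrite EQ EA /goldstein_const mulrA ler_nM2r //.
apply: ler_pM => //.
- by apply: divr_ge0; lra.
- by apply: divr_ge0; [lra|apply: mulr_ge0; lra].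
Qed.

Lemma bernoulli_ineq (R : realType) (a : R) (N : nat) : 0 <= a <= 1 ->
  1 - N%:R * a <= (1 - a) ^+ N.
Proof.
move=> /andP[a_ge0 a_le1]; elim: N => [|N IH]; first by rewrite mul0r subr0 expr0.
rewrite exprS -natr1.
have N_ge0 : 0 <= N%:R :> R := ler0n _ _.
have pow_ge0 : 0 <= (1 - a) ^+ N by apply: exprn_ge0; lra.
have [lin_ge0|lin_lt0] := lerP 0 (1 - N%:R * a).
  apply: le_trans (_ : (1 - a) * (1 - N%:R * a) <= _); first by nra.
  by rewrite ler_wpM2l // subr_ge0.
by apply: le_trans (_ : 0 <= _); [nra | rewrite mulr_ge0 // subr_ge0].
Qed.

Lemma sqrtr_le_mul (R : realType) (a b y : R) : 0 <= b -> 0 <= y ->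
  a <= b * y ^+ 2 -> Num.sqrt a <= Num.sqrt b * y.
Proof.
move=> b_ge0 y_ge0 a_le.
have : Num.sqrt a <= Num.sqrt (b * y ^+ 2) by rewrite ler_sqrt // mulr_ge0 // sqr_ge0.
by rewrite sqrtrM // sqrtr_sqr ger0_norm.
Qed.

Lemma le_convex_combination (R : realType) (a u M kap B : R) : 0 < kap -> 0 < B ->
  a <= B * u -> a <= M - kap * u -> a <= B / (kap + B) * M.
Proof.
move=> kap_gt0 B_gt0 aBu aMu.
rewrite mulrC mulrA ler_pdivlMr ?addr_gt0 //.
have := ler_wpM2l (ltW kap_gt0) aBu; have := ler_wpM2l (ltW B_gt0) aMu.
nra.
Qed.

Definition nonmonotone_rate (R : realType) (rho : R) (N : nat) : R :=
  1 - (1 - rho) / N%:R.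

Section NonmonotoneRate.
Variables (R : realType) (rho : R) (N : nat).
Hypotheses (N_gt0 : (0 < N)%N) (rho_gt0 : 0 < rho) (rho_lt1 : rho < 1).
Local Notation r := (nonmonotone_rate rho N).

Lemma nonmonotone_rate_gt0 : 0 < r.
Proof.
rewrite /nonmonotone_rate subr_gt0 ltr_pdivrMr ?ltr0n // mul1r.
by apply: (@lt_le_trans _ _ 1); rewrite ?gtrDl ?oppr_lt0 ?ler1n.
Qed.

Lemma nonmonotone_rate_lt1 : r < 1.
Proof.
by rewrite /nonmonotone_rate ltrBlDr ltrDl divr_gt0 ?ltr0n // subr_gt0.
Qed.

(* Bernoulli: [(1 - a)^N >= 1 - N a] with [N a = 1 - rho]. *)
Lemma nonmonotone_rate_expn_ge : rho <= r ^+ N.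
Proof.
have a01 : 0 <= (1 - rho) / N%:R <= 1.
  rewrite divr_ge0 ?ler0n ?subr_ge0 ?ltW //= -subr_gt0.
  exact: nonmonotone_rate_gt0.
have := bernoulli_ineq N a01.
by rewrite mulrC divfK ?pnatr_eq0 -?lt0n // opprB addrCA subrr addr0.
Qed.

Variable m : nat -> nat.
Hypotheses (m0 : m 0%N = 0%N) (mS : forall k, (m k.+1 <= minn (m k).+1 (N - 1))%N).

Lemma memory_bound k : (m k <= k)%N /\ (m k < N)%N.
Proof.
elim: k => [|k [mk_le mk_lt]]; first by rewrite m0.
have := mS k; rewrite leq_min => /andP[mS_le mS_lt]; split.
- exact: leq_trans mS_le _.
- by apply: leq_ltn_trans mS_lt _; rewrite subn1 ltn_predL.
Qed.

Variables (Fs : nat -> R) (Fo : R).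
Hypothesis Fo_le : Fo <= Fs 0%N.
Hypothesis Fs_step : forall k, Fs k.+1 - Fo <= rho * (Fmax Fs m k - Fo).

Lemma nonmonotone_linear_rate k : Fs k - Fo <= (Fs 0%N - Fo) * r ^+ k.
Proof.
have r_ge0 := ltW nonmonotone_rate_gt0; have r_le1 := ltW nonmonotone_rate_lt1.
have E0_ge0 : 0 <= Fs 0%N - Fo by rewrite subr_ge0.
elim/ltn_ind: k => -[_ | k IH]; first by rewrite expr0 mulr1.
have [mk_le mk_lt] := memory_bound k.
have Fmax_le : Fmax Fs m k - Fo <= (Fs 0%N - Fo) * r ^+ (k - m k).
  rewrite lerBlDl; apply: bigmax_le => [|i _]; rewrite -lerBlDl.
    apply: le_trans (IH k (ltnSn k)) _.
    by rewrite ler_wpM2l // ler_wiXn2l // leq_subr.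
  apply: le_trans (IH _ (leq_subr i k)) _.
  by rewrite ler_wpM2l // ler_wiXn2l // leq_sub2l // -ltnS ltn_ord.
apply: le_trans (Fs_step k) _.
apply: le_trans (ler_wpM2l (ltW rho_gt0) Fmax_le) _.
rewrite mulrCA ler_wpM2l //.
apply: le_trans (ler_wpM2r (exprn_ge0 _ r_ge0) nonmonotone_rate_expn_ge) _.
rewrite -exprD ler_wiXn2l //.
by rewrite -[in leqLHS](subnKC mk_le) -addSn leq_add2r.
Qed.

End NonmonotoneRate.

Section Iteration.
Variables (R : realType) (n : nat).
Local Notation V := 'rV[R]_n.
Local Notation dv := (@dotv R n).
Variables (f c : V -> R) (gf : V -> V) (mu L1 L' : R).
Variables (x d : nat -> V) (alpha tau eta : nat -> R) (tau_min tau_max theta : R).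
Variables (m : nat -> nat) (xstar : V).

Let F y := f y + mu * c y.
Let Fs k := F (x k).
Let Delta k := dv (d k) (gf (x k)) + mu * (c (x k + d k) - c (x k)).
Let Rk := refval Fs m eta.

Hypotheses (mu_ge0 : 0 <= mu) (c_cvx : convex_fun c) (f_grad : is_gradient f gf).
Hypotheses (L1_gt0 : 0 < L1)
  (gf_lip : forall y z, dv (gf y - gf z) (gf y - gf z) <= L1 ^+ 2 * dv (y - z) (y - z)).
Hypotheses (L'_gt0 : 0 < L')
  (gf_strong : forall y z, L' * dv (y - z) (y - z) <= dv (gf y - gf z) (y - z)).
Hypotheses (tau_min_gt0 : 0 < tau_min) (tau_bounds : forall k, tau_min <= tau k <= tau_max).
Hypothesis d_prox : forall k, is_prox c (x k - tau k *: gf (x k)) (mu * tau k) (x k + d k).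
Hypothesis d_neq0 : forall k, d k != 0.
Hypothesis xS : forall k, x k.+1 = x k + alpha k *: d k.
Hypothesis alpha01 : forall k, 0 < alpha k <= 1.
Hypothesis eta01 : forall k, 0 <= eta k <= 1.
Hypothesis xstar_min : forall y, F xstar <= F y.

Lemma tau_gt0 k : 0 < tau k.
Proof. by have /andP[tk _] := tau_bounds k; apply: lt_le_trans tk. Qed.

Lemma tau_max_gt0 : 0 < tau_max.
Proof. by have /andP[_ tk] := tau_bounds 0; apply: lt_le_trans tk; apply: tau_gt0. Qed.

Lemma prox_step_ineq k w :
  dv (tau k *: gf (x k) + d k) (x k + d k - w) <= mu * tau k * (c w - c (x k + d k)).
Proof.
have := prox_variational_ineq w c_cvx (mulr_ge0 mu_ge0 (ltW (tau_gt0 k))) (d_prox k).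
have -> : x k - tau k *: gf (x k) - (x k + d k) = - (tau k *: gf (x k) + d k).
  by apply/rowP => i; rewrite !mxE; ring.
by rewrite -opprB dotvNl dotvNr opprK.
Qed.

Lemma tau_Delta_le k : tau k * Delta k <= - dv (d k) (d k).
Proof.
have := prox_step_ineq k (x k).
rewrite [_ + _ - x k]addrAC subrr add0r dotvDl dotvZl (dotvC (gf (x k))) /Delta.
nra.
Qed.

Lemma Delta_lt0 k : Delta k < 0.
Proof.
rewrite -(pmulr_rlt0 _ (tau_gt0 k)); apply: le_lt_trans (tau_Delta_le k) _.
by rewrite oppr_lt0 dotv_gt0.
Qed.

Lemma dir_le_Delta k : dv (d k) (d k) <= tau_max * - Delta k.
Proof.
have /andP[_ tk_le] := tau_bounds k.
apply: le_trans (_ : tau k * - Delta k <= _).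
  by rewrite mulrN lerNr; apply: tau_Delta_le.
by rewrite ler_wpM2r // oppr_ge0 ltW // Delta_lt0.
Qed.

Lemma F_step_le k :
  Fs k.+1 - Fs k <= alpha k * Delta k + alpha k ^+ 2 * L1 * dv (d k) (d k).
Proof.
have /andP[a_gt0 a_le1] := alpha01 k.
have := descent f_grad L1_gt0 gf_lip (x k) (alpha k *: d k).
rewrite !dotvZl !dotvZr => f_desc.
have := convex_along (x k) (d k) c_cvx (ltac:(by rewrite ltW // a_le1) : 0 <= alpha k <= 1).
move=> /(ler_wpM2l mu_ge0) c_le.
rewrite /Fs /F /Delta xS (dotvC (d k)) expr2; nra.
Qed.

Lemma refval_bounds k : Fs k <= Rk k <= Fmax Fs m k.
Proof.
have /andP[e_ge0 e_le1] := eta01 k.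
have Fs_le : Fs k <= Fmax Fs m k by apply: bigmax_ge_id.
by rewrite /Rk /refval; apply/andP; split; nra.
Qed.

Lemma F_quadratic_growth y : L' / 4 * dv (y - xstar) (y - xstar) <= F y - F xstar.
Proof.
have := quadratic_growth f_grad (ltW L'_gt0) gf_strong y xstar.
have := composite_opt_cond f_grad L1_gt0 gf_lip c_cvx mu_ge0 xstar_min (y - xstar).
rewrite [xstar + _]addrC subrK /F; lra.
Qed.

Lemma F_error_bound k : Fs k - F xstar <= (2 + 4 / (L' * tau_min)) * - Delta k.
Proof.
set t := tau k; set gap := Fs k - F xstar.
have t_gt0 : 0 < t := tau_gt0 k.
have Lt_gt0 : 0 < L' * t by rewrite mulr_gt0.
have tD := tau_Delta_le k; rewrite -/t in tD.
have gap_le : t * gap <= - (t * Delta k) - dv (d k) (x k - xstar) - dv (d k) (d k).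
  have := prox_step_ineq k xstar.
  rewrite -/t [x k + _ - _]addrAC dotvDl !(dotvDr (x k - xstar) (d k)) !dotvZl.
  rewrite (dotvC _ (d k)) => prox.
  have conv : t * (f (x k) - f xstar) <= t * dv (gf (x k)) (x k - xstar).
    have := gradient_lower_bound f_grad (ltW L'_gt0) gf_strong xstar (x k).
    rewrite -[xstar - x k]opprB dotvNr lerNl opprB.
    exact/ler_wpM2l/ltW.
  rewrite /gap /Fs /F /Delta; nra.
have de_le : - dv (d k) (x k - xstar) <= t / 2 * gap + 2 / (L' * t) * dv (d k) (d k).
  have s_gt0 : 0 < L' * t / 4 by rewrite divr_gt0.
  have := dotv_young (x k - xstar) (- d k) s_gt0.
  rewrite !(dotvNl, dotvNr) opprK (dotvC (x k - xstar)).
  have := F_quadratic_growth (x k); rewrite -/(Fs k) -/gap.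
  move=> /(ler_wpM2l (ltW t_gt0)) qg young; move: young qg.
  have -> : dv (d k) (d k) / (L' * t / 4) = 4 / (L' * t) * dv (d k) (d k).
    by field; rewrite !gt_eqF.
  have -> : L' * t / 4 * dv (x k - xstar) (x k - xstar)
          = t * (L' / 4 * dv (x k - xstar) (x k - xstar)) by ring.
  lra.
have dd_le : 2 / (L' * t) * dv (d k) (d k) <= 2 / L' * - Delta k.
  rewrite -lerNr -mulrN in tD.
  have -> : 2 / L' * - Delta k = 2 / (L' * t) * (t * - Delta k).
    by field; rewrite !gt_eqF.
  by rewrite ler_wpM2l // divr_ge0 // ltW.
have gap_le' : gap <= (2 + 4 / (L' * t)) * - Delta k.
  rewrite -(ler_pM2l (_ : 0 < t / 2)) ?divr_gt0 //.
  have -> : t / 2 * ((2 + 4 / (L' * t)) * - Delta k) = - (t * Delta k) + 2 / L' * - Delta k.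
    by field; rewrite !gt_eqF.
  have := dotv_ge0 (d k); lra.
apply: le_trans gap_le' _.
rewrite ler_pM2r ?oppr_gt0 ?Delta_lt0 // lerD2l ler_pM2l //.
rewrite lef_pV2 ?posrE ?mulr_gt0 // ler_pM2l //.
by have /andP[] := tau_bounds k.
Qed.

Lemma dir_le_dist k :
  dv (d k) (d k) <= 2 * (1 + tau_max ^+ 2 * L1 ^+ 2) * dv (x k - xstar) (x k - xstar).
Proof.
set t := tau k; set e := x k - xstar; set dd := dv (d k) (d k).
have t_gt0 : 0 < t := tau_gt0 k.
have := prox_step_ineq k xstar.
rewrite -/t [x k + _ - _]addrAC dotvDl !(dotvDr (x k - xstar) (d k)) !dotvZl => prox.
have := composite_opt_cond f_grad L1_gt0 gf_lip c_cvx mu_ge0 xstar_min (e + d k).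
have -> : xstar + (e + d k) = x k + d k by rewrite addrA [xstar + _]addrC subrK.
rewrite dotvDr => /(mulr_ge0 (ltW t_gt0)); rewrite !mulrDr => opt.
have mono : 0 <= t * dv (gf (x k) - gf xstar) e.
  apply: mulr_ge0; first exact: ltW.
  apply: le_trans (gf_strong (x k) xstar).
  by apply: mulr_ge0; [exact: ltW | exact: dotv_ge0].
rewrite dotvBl mulrBr in mono.
(* summing the prox inequality, [t] times the optimality condition and monotonicity *)
have dd_le : dd <= t * (dv (gf xstar) (d k) - dv (gf (x k)) (d k)) - dv (d k) e.
  rewrite /dd; lra.
have young1 : - dv (d k) e <= dv e e + dd / 4.
  have := dotv_young e (- d k) (ltr0Sn R 1).
  rewrite !(dotvNl, dotvNr) opprK (dotvC e) -/dd; lra.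
have young2 : t * (dv (gf xstar) (d k) - dv (gf (x k)) (d k))
              <= t ^+ 2 * L1 ^+ 2 * dv e e + dd / 4.
  have := dotv_young (t *: (gf xstar - gf (x k))) (d k) (ltr0Sn R 1).
  rewrite !dotvZl !dotvZr dotvBl -/dd.
  have ee : dv (xstar - x k) (xstar - x k) = dv e e by rewrite -opprB dotvNl dotvNr opprK.
  have := gf_lip xstar (x k); rewrite ee => /(ler_wpM2l (sqr_ge0 t)) lip.
  rewrite expr2 in lip *; lra.
have t_le : t ^+ 2 * L1 ^+ 2 * dv e e <= tau_max ^+ 2 * L1 ^+ 2 * dv e e.
  apply: ler_wpM2r; first exact: dotv_ge0.
  apply: ler_wpM2r; first exact: sqr_ge0.
  have /andP[_ t_le] := tau_bounds k.
  by rewrite !expr2; apply: ler_pM => //; exact: ltW.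
lra.
Qed.

Hypothesis theta_gt0 : 0 < theta.
Hypothesis goldstein : forall k,
  theta <= (Fs k.+1 - Fs k) / (alpha k * Delta k)
           * `|1 - (Fs k.+1 - Rk k) / (alpha k * Delta k)|.
Hypothesis curvature : forall k,
  - (alpha k ^+ 2 / 2) * L1 * dv (d k) (d k) + alpha k * Delta k <= Fs k.+1 - Rk k.

Lemma sufficient_decrease k :
  Fs k.+1 - Rk k <= goldstein_const theta (L1 * tau_max) * Delta k.
Proof.
have /andP[Fs_le _] := refval_bounds k.
apply: (goldstein_decrease (P := Fs k.+1 - Fs k) (Nd := dv (d k) (d k))
  (alpha01 k) (Delta_lt0 k) erefl (dir_le_Delta k) L1_gt0 tau_max_gt0 theta_gt0).
- by rewrite lerD2l lerN2.
- exact: F_step_le.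
- by have := curvature k; rewrite !mulNr addrC.
- exact: goldstein.
Qed.

Local Notation kappa := (goldstein_const theta (L1 * tau_max)).
Local Notation B := (2 + 4 / (L' * tau_min) + L1 * tau_max).

Lemma B_gt0 : 0 < B.
Proof.
have h1 : 0 < 4 / (L' * tau_min) by rewrite divr_gt0 ?mulr_gt0.
have h2 : 0 < L1 * tau_max by rewrite mulr_gt0 ?tau_max_gt0.
by rewrite !addr_gt0.
Qed.

Lemma F_contraction k : Fs k.+1 - F xstar <= B / (kappa + B) * (Fmax Fs m k - F xstar).
Proof.
have kappa_gt0 : 0 < kappa by rewrite goldstein_const_gt0 ?mulr_gt0 ?tau_max_gt0.
apply: (le_convex_combination (u := - Delta k) kappa_gt0 B_gt0).
- have /andP[a_gt0 a_le1] := alpha01 k.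
  have aD : alpha k * Delta k <= 0 by rewrite pmulr_rle0 // ltW // Delta_lt0.
  have dd_le : alpha k ^+ 2 * L1 * dv (d k) (d k) <= L1 * tau_max * - Delta k.
    apply: (@le_trans _ _ (L1 * dv (d k) (d k))).
      rewrite -mulrA ler_piMl ?mulr_ge0 ?dotv_ge0 ?(ltW L1_gt0) //.
      exact: exprn_ile1 (ltW a_gt0) a_le1.
    by rewrite -mulrA ler_pM2l // dir_le_Delta.
  have := F_step_le k; have := F_error_bound k.
  rewrite -/(Fs k) !mulrDl; lra.
- have /andP[_ Rk_le] := refval_bounds k; have := sufficient_decrease k.
  rewrite mulrN; lra.
Qed.

Lemma F_gap_linear_rate (N : nat) :
  (0 < N)%N -> m 0%N = 0%N -> (forall k, (m k.+1 <= minn (m k).+1 (N - 1))%N) ->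
  exists2 r : R, 0 < r < 1 & forall k, Fs k - F xstar <= (Fs 0%N - F xstar) * r ^+ k.
Proof.
move=> N_gt0 m0 mS.
have kappa_gt0 : 0 < kappa by rewrite goldstein_const_gt0 ?mulr_gt0 ?tau_max_gt0.
have B0 := B_gt0.
have rho_gt0 : 0 < B / (kappa + B) by rewrite divr_gt0 // addr_gt0.
have rho_lt1 : B / (kappa + B) < 1 by rewrite ltr_pdivrMr ?mul1r ?ltrDr // addr_gt0.
exists (nonmonotone_rate (B / (kappa + B)) N).
  by rewrite nonmonotone_rate_gt0 ?nonmonotone_rate_lt1.
exact: (nonmonotone_linear_rate N_gt0 rho_gt0 rho_lt1 m0 mS (xstar_min _) F_contraction).
Qed.

Lemma linear_convergence (N : nat) :
  (0 < N)%N -> m 0%N = 0%N -> (forall k, (m k.+1 <= minn (m k).+1 (N - 1))%N) ->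
  exists q xi1 xi2 xi3 : R,
    [/\ 0 < q < 1, 0 < xi1, 0 < xi2, 0 < xi3 &
     forall k, [/\ Fs k - F xstar <= xi1 * q ^+ (2 * k),
                   enorm (x k - xstar) <= xi2 * q ^+ k &
                   enorm (d k) <= xi3 * q ^+ k]].
Proof.
move=> N_gt0 m0 mS.
have [r /andP[r_gt0 r_lt1] gap_le] := F_gap_linear_rate N_gt0 m0 mS.
have q01 : 0 < Num.sqrt r < 1 by rewrite sqrtr_gt0 r_gt0 /= -sqrtr1 ltr_sqrt.
set xi1 := Fs 0%N - F xstar + 1.
have E0_ge0 : 0 <= Fs 0%N - F xstar by rewrite subr_ge0; apply: xstar_min.
have xi1_gt0 : 0 < xi1 by rewrite /xi1; lra.
set K := 2 * (1 + tau_max ^+ 2 * L1 ^+ 2).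
have K_gt0 : 0 < K.
  by rewrite /K; have := mulr_ge0 (sqr_ge0 tau_max) (sqr_ge0 L1); lra.
have c_gt0 : 0 < 4 / L' * xi1 by rewrite !mulr_gt0 ?invr_gt0.
exists (Num.sqrt r), xi1, (Num.sqrt (4 / L' * xi1)), (Num.sqrt (K * (4 / L' * xi1))).
split=> [||||k]; [exact: q01 | exact: xi1_gt0 | by rewrite sqrtr_gt0 |
                  by rewrite sqrtr_gt0 mulr_gt0 |].
have rk : Num.sqrt r ^+ k ^+ 2 = r ^+ k by rewrite -exprM mulnC exprM sqr_sqrtr ?ltW.
have gap_k : Fs k - F xstar <= xi1 * Num.sqrt r ^+ k ^+ 2.
  rewrite rk; apply: le_trans (gap_le k) _.
  apply: ler_wpM2r; first by rewrite exprn_ge0 // ltW.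
  by rewrite /xi1 lerDl.
have dist_k : dv (x k - xstar) (x k - xstar) <= 4 / L' * xi1 * Num.sqrt r ^+ k ^+ 2.
  have := F_quadratic_growth (x k); rewrite -/(Fs k) => qg.
  have -> : dv (x k - xstar) (x k - xstar)
          = 4 / L' * (L' / 4 * dv (x k - xstar) (x k - xstar)) by field; rewrite gt_eqF.
  rewrite -[4 / L' * xi1 * _]mulrA ler_pM2l ?divr_gt0 //.
  exact: le_trans qg gap_k.
have q_ge0 : 0 <= Num.sqrt r ^+ k by rewrite exprn_ge0 ?sqrtr_ge0.
split.
- by rewrite mulnC exprM.
- exact: sqrtr_le_mul (ltW c_gt0) q_ge0 dist_k.
- apply: sqrtr_le_mul (ltW (mulr_gt0 K_gt0 c_gt0)) q_ge0 _.
  apply: le_trans (dir_le_dist k) _; rewrite -/K -[K * _ * _]mulrA.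
  apply: ler_wpM2l; first exact: ltW.
  exact: dist_k.
Qed.

End Iteration.

Unset Implicit Arguments.

Theorem theorem3 (R : realType) (n : nat)
  (f c : 'rV[R]_n -> R) (gf : 'rV[R]_n -> 'rV[R]_n) (mu L L' : R)
  (x d : nat -> 'rV[R]_n) (alpha tau eta : nat -> R) (tau_min tau_max theta : R)
  (N : nat) (m : nat -> nat) (xstar : 'rV[R]_n) :
  let F := fun y => f y + mu * c y in
  let Fs := fun k => F (x k) in
  let Delta := fun k => dotv (d k) (gf (x k)) + mu * (c (x k + d k) - c (x k)) in
  let Rk := refval Fs m eta in
  let nu := fun k => (Fs k.+1 - Fs k) / (alpha k * Delta k) in
  let lam := fun k => (Fs k.+1 - Rk k) / (alpha k * Delta k) in
  0 < mu ->
  convex_fun c ->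
  is_gradient f gf ->
  continuous gf ->
  (forall y z, enorm (gf y - gf z) <= L * enorm (y - z)) ->
  0 < L' ->
  (forall y z, dotv (gf y - gf z) (y - z) >= L' * enorm (y - z) ^+ 2) ->
  (0 < N)%N -> m 0%N = 0%N ->
  (forall k, (m k.+1 <= minn (m k).+1 (N - 1))%N) ->
  (forall k, 0 <= eta k <= 1) ->
  0 < tau_min -> tau_min <= tau_max ->
  (forall k, tau_min <= tau k <= tau_max) ->
  (forall k, is_prox c (x k - tau k *: gf (x k)) (mu * tau k) (x k + d k)) ->
  (forall k, d k != 0) ->
  (forall k, x k.+1 = x k + alpha k *: d k) ->
  0 < theta ->
  (forall k, 0 < alpha k <= 1) ->
  (forall k, nu k * `|1 - lam k| >= theta) ->
  (forall k, Fs k.+1 - Rk k >= - (alpha k ^+ 2 / 2) * L * enorm (d k) ^+ 2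
                               + alpha k * Delta k) ->
  x @ \oo --> xstar ->
  (forall y, F xstar <= F y) ->
  exists q xi1 xi2 xi3 : R,
    [/\ 0 < q < 1, 0 < xi1, 0 < xi2, 0 < xi3 &
     forall k, [/\ Fs k - F xstar <= xi1 * q ^+ (2 * k),
                   enorm (x k - xstar) <= xi2 * q ^+ k &
                   enorm (d k) <= xi3 * q ^+ k]].
Proof.
move=> F Fs Delta Rk nu lam mu_gt0 c_cvx f_grad _ gf_lip L'_gt0 gf_strong N_gt0 m0 mS
  eta01 tau_min_gt0 _ tau_bounds d_prox d_neq0 xS theta_gt0 alpha01 goldstein curv _ xstar_min.
have L1_gt0 : 0 < `|L| + 1 by rewrite ltr_pwDr ?normr_ge0.
have curv1 k : - (alpha k ^+ 2 / 2) * (`|L| + 1) * dotv (d k) (d k) + alpha k * Delta k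
               <= Fs k.+1 - Rk k.
  apply: le_trans (curv k); rewrite lerD2r enorm_sqr !mulNr lerN2.
  apply: ler_wpM2r; first exact: dotv_ge0.
  apply: ler_wpM2l; first by rewrite divr_ge0 ?sqr_ge0.
  by rewrite (le_trans (ler_norm L)) // lerDl.
exact: (linear_convergence (ltW mu_gt0) c_cvx f_grad L1_gt0 (lipschitz_dotv gf_lip)
  L'_gt0 (fun y z => ltac:(by rewrite -enorm_sqr; exact: gf_strong)) tau_min_gt0 tau_bounds
  d_prox d_neq0 xS alpha01 eta01 xstar_min theta_gt0 goldstein curv1 N_gt0 m0 mS).
Qed.
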